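(* Let $G$ be a finite simple undirected connected graph, and let $c:V(G)\to \mathbb{R}_{>0}$ and $\kappa:V(G)\to \mathbb{Z}$ be functions such that $0\leq \kappa(u)\leq d_G(u)$ for every vertex $u$ of $G$. Then $$\beta(G,c,\kappa) = \sum_{u\in V(G)} \frac{c(u)\big(d_G(u)-\kappa(u)\big)\big(d_G(u)-\kappa(u)+1\big)}{2(d_G(u)+1)}$$ holds if and only if one of the following holds: (i) $\kappa(u)=d_G(u)$ for every vertex $u$ of $G$; (ii) $c$ is constant on $V(G)$ and $\kappa(u)=0$ for every vertex $u$ of $G$; (iii) $G$ is a clique (complete graph), $c$ and $\kappa$ are constant on $V(G)$, and $0<\kappa(u)<d_G(u)$ for every vertex $u$ of $G$.
   Context: $d_G(u)$ denotes the degree of $u$ in $G$, and $[n]=\{1,\dots,n\}$. For a function $\lambda:V(G)\to\mathbb{Z}$, a set $I\subseteq V(G)$ is called $\lambda$-degenerate in $G$ if there is a linear ordering $u_1,\ldots,u_k$ of the vertices of $I$ such that for every $i\in[k]$, $u_i$ has at most $\lambda(u_i)$ neighbors in $\{u_j: j\in[i-1]\}$. Define $$\beta(G,c,\kappa)=\min\Big\{\sum_{u\in V(G)} c(u)\iota(u) : \iota:V(G)\to\mathbb{Z}_{\geq 0} \text{ and } V(G) \text{ is } (\kappa+\iota)\text{-degenerate in } G\Big\}.$$ (It is known that always $\beta(G,c,\kappa)$ is at most the right-hand side sum in the claim.) *)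

From HB Require Import structures.
From mathcomp Require Import all_boot all_order all_algebra.
Set Implicit Arguments. Unset Strict Implicit. Unset Printing Implicit Defensive.
Import Order.TTheory GRing.Theory Num.Theory.
Local Open Scope ring_scope.

Definition simple_graph (T : finType) (e : rel T) : Prop :=
  symmetric e /\ irreflexive e.

Definition connected_graph (T : finType) (e : rel T) : Prop :=
  forall x y : T, connect e x y.

Definition deg (T : finType) (e : rel T) (u : T) : nat := #|[set v | e u v]|.

Definition degenerate (T : finType) (e : rel T) (lam : T -> int) (I : {set T}) : Prop :=
  exists s : seq T,
    [/\ uniq s, (forall x, (x \in s) = (x \in I)) &
        forall (s1 s2 : seq T) (u : T), s = s1 ++ u :: s2 ->
          (#|[set v in s1 | e u v]|)%:Z <= lam u].

Definition admissible (T : finType) (e : rel T) (kappa : T -> int) (iota : T -> nat) : Prop :=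
  degenerate e (fun u => kappa u + (iota u)%:Z) [set: T].

Definition cost (R : numDomainType) (T : finType) (c : T -> R) (iota : T -> nat) : R :=
  \sum_(u : T) c u * (iota u)%:R.

Definition is_beta (R : realDomainType) (T : finType) (e : rel T) (c : T -> R)
    (kappa : T -> int) (b : R) : Prop :=
  (exists iota, admissible e kappa iota /\ cost c iota = b) /\
  (forall iota, admissible e kappa iota -> b <= cost c iota).

(* An ordering of the vertices, given by an injective [pos : T -> nat] (u comes
   before v iff pos u < pos v), certifies the admissible iota(u) = b(u) - k(u)
   (truncated at 0), where b(u) is the number of earlier neighbours of u;
   conversely every admissible iota dominates such a certificate. So beta is the
   minimum over orderings of the order cost sum_u c(u) (b(u) - k(u)).  Over a
   uniformly random ordering, b(u) is uniform on {0, ..., d(u)}, so the right-hand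
   side is the average order cost, and equality holds iff the order cost does not
   depend on the ordering.
   Trading the places of adjacent vertices u, v that come right after a set S
   changes the cost by c(u) [k(u) <= |N(u) & S|] - c(v) [k(v) <= |N(v) & S|];
   with S empty, S = V - {u, v} and S a k(u)-subset of N(u) - {v}, connectivity
   turns these constraints into (i), (ii) or (iii).  Conversely the cost is
   constant in each case, in (ii) by the handshake lemma. *)

From HB Require Import structures.
From mathcomp Require Import all_boot all_order all_algebra fingroup perm.
From mathcomp Require Import ring lra zify.
From Stdlib Require Import FunctionalExtensionality.
Set Implicit Arguments. Unset Strict Implicit. Unset Printing Implicit Defensive.
Import Order.TTheory GRing.Theory Num.Theory.

Lemma index_ltn_prefix (T : eqType) (s1 s2 : seq T) u v : uniq (s1 ++ u :: s2) ->
  (index v (s1 ++ u :: s2) < index u (s1 ++ u :: s2)) = (v \in s1).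
Proof.
rewrite cat_uniq /= => /and3P[_ /norP[us1 _] _].
rewrite !index_cat (negbTE us1) /= eqxx addn0.
by case: ifP => vs1; [rewrite index_mem | rewrite ltnNge leq_addr].
Qed.

Lemma exists_subset_card (T : finType) (A : {set T}) m :
  m <= #|A| -> exists2 S : {set T}, S \subset A & #|S| = m.
Proof.
rewrite -bin_gt0 -cards_draws => /card_gt0P[S].
by rewrite inE => /andP[sSA /eqP cardS]; exists S.
Qed.

Lemma exists_subset_card_mem (T : finType) (A : {set T}) w m :
  w \in A -> 0 < m <= #|A| ->
  exists S : {set T}, [/\ S \subset A, w \in S & #|S| = m].
Proof.
move=> wA /andP[m_gt0 leq_mA].
have [|S sSA cardS] := @exists_subset_card _ (A :\ w) m.-1.
  by rewrite (cardsD1 w A) wA in leq_mA; lia.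
have wS : w \notin S by apply/negP => /(subsetP sSA); rewrite !inE eqxx.
exists (w |: S); split; last by rewrite cardsU1 wS cardS; lia.
  by rewrite subUset sub1set wA (subset_trans sSA) ?subsetDl.
by rewrite !inE eqxx.
Qed.

Lemma connected_invariant (T : finType) (e : rel T) (P : T -> Prop) x :
  connected_graph e -> (forall y z, e y z -> P y -> P z) -> P x -> forall y, P y.
Proof.
move=> conn closedP Px y; case/connectP: (conn x y) => p + ->.
by elim: p x Px => [|z p IH] x Px //= /andP[exz pz]; apply: IH (closedP _ _ exz Px) pz.
Qed.

Section Rank.
Variable T : finType.
Implicit Types (pos : T -> nat) (A : {set T}).

Definition rank_in pos A x := #|[set y in A | pos y < pos x]|.

Lemma rank_in_lt pos A x : x \in A -> rank_in pos A x < #|A|.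
Proof.
move=> xA; apply: proper_card; apply/properP; split.
  by apply/subsetP => y; rewrite inE => /andP[].
by exists x => //; rewrite inE ltnn andbF.
Qed.

Lemma rank_in_ltn pos A x y :
  x \in A -> pos x < pos y -> rank_in pos A x < rank_in pos A y.
Proof.
move=> xA lt_xy; apply: proper_card; apply/properP; split.
  by apply/subsetP => z; rewrite !inE => /andP[-> /ltn_trans ->].
by exists x; rewrite !inE ?xA ?lt_xy // ltnn andbF.
Qed.

Lemma rank_in_inj pos A : injective pos -> {in A &, injective (rank_in pos A)}.
Proof.
move=> pos_inj x y xA yA eq_xy; apply: pos_inj.
case: (ltngtP (pos x) (pos y)) => // [/(rank_in_ltn xA) | /(rank_in_ltn yA)];
  by rewrite eq_xy ltnn.
Qed.

Lemma sum_rank_in (V : nmodType) pos A (h : nat -> V) : injective pos ->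
  (\sum_(x in A) h (rank_in pos A x) = \sum_(j < #|A|) h j)%R.
Proof.
move=> pos_inj; rewrite -big_enum -(big_map (rank_in pos A) xpredT h).
rewrite -(big_mkord xpredT h); apply: perm_big; rewrite /index_iota subn0.
have ranks_uniq : uniq [seq rank_in pos A x | x <- enum A].
  by rewrite map_inj_in_uniq ?enum_uniq // => x y; rewrite !mem_enum; apply: rank_in_inj.
apply: uniq_perm => //; first exact: iota_uniq.
have [|| _ //] := uniq_min_size ranks_uniq (s2 := iota 0 #|A|).
- by move=> j /mapP[x]; rewrite mem_enum => xA ->; rewrite mem_iota rank_in_lt.
- by rewrite size_map size_iota -cardE.
Qed.

Definition perm_pos (p : {perm T}) x : nat := enum_rank (p x).

Lemma perm_pos_inj p : injective (perm_pos p).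
Proof. by move=> x y /val_inj /enum_rank_inj /perm_inj. Qed.

(* A uniformly random ordering puts a fixed x of A at a uniformly random rank in A. *)
Lemma sum_perm_rank_in (h : nat -> nat) A x : x \in A ->
  #|A| * \sum_(p : {perm T}) h (rank_in (perm_pos p) A x) =
  #|{perm T}| * \sum_(j < #|A|) h j.
Proof.
move=> xA.
have rank_swap y : y \in A -> \sum_(p : {perm T}) h (rank_in (perm_pos p) A x) =
                           \sum_(p : {perm T}) h (rank_in (perm_pos p) A y).
  move=> yA; rewrite (reindex_inj (mulgI (tperm x y))); apply: eq_bigr => p _.
  rewrite /rank_in -[in RHS](card_preimset _ (@perm_inj _ (tperm x y))).
  congr h; apply: eq_card => z; rewrite !inE /perm_pos !permM tpermL.
  by case: tpermP => [->|->|] //; rewrite xA yA.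
rewrite -sum_nat_const (eq_bigr _ rank_swap) exchange_big /=.
rewrite (eq_bigr (fun=> \sum_(j < #|A|) h j)) => [|p _]; first by rewrite sum_nat_const.
exact: sum_rank_in (@perm_pos_inj p).
Qed.

Lemma perm_pos_of_inj pos : injective pos ->
  exists p : {perm T}, forall x y, (perm_pos p x < perm_pos p y) = (pos x < pos y).
Proof.
move=> pos_inj.
have rank_lt x : rank_in pos [set: T] x < #|T| by rewrite -cardsT rank_in_lt ?inE.
pose f x := enum_val (Ordinal (rank_lt x)).
have f_inj : injective f.
  move=> x y /enum_val_inj /(congr1 val) /=.
  by apply: (rank_in_inj pos_inj); rewrite inE.
exists (perm f_inj) => x y; rewrite /perm_pos !permE /f !enum_valK /=.
case: (ltngtP (pos x) (pos y)) => [lt_xy | lt_yx | /pos_inj ->]; last by rewrite ltnn.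
- by rewrite rank_in_ltn ?inE.
- by apply/negbTE; rewrite -leqNgt ltnW // rank_in_ltn ?inE.
Qed.

Definition lex_pos (key : T -> nat) x := key x * #|T| + enum_rank x.

Lemma lex_pos_ltn key x y : (lex_pos key x < lex_pos key y) =
  (key x < key y) || (key x == key y) && (enum_rank x < enum_rank y).
Proof.
have lex_lt a b (r s : 'I_#|T|) : a < b -> a * #|T| + r < b * #|T| + s.
  move=> lt_ab; apply: (@leq_trans (a.+1 * #|T|)); first by rewrite mulSnr ltn_add2l.
  by rewrite (leq_trans _ (leq_addr _ _)) // leq_mul2r lt_ab orbT.
rewrite /lex_pos; case: (ltngtP (key x) (key y)) => [lt_k | lt_k | ->] /=.
- exact: lex_lt.
- by apply/negbTE; rewrite -leqNgt ltnW ?lex_lt.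
- by rewrite ltn_add2l.
Qed.

Lemma lex_pos_inj key : injective (lex_pos key).
Proof.
move=> x y /(congr1 (modn^~ #|T|)); rewrite /= !modnMDl !modn_small //.
by move/val_inj/enum_rank_inj.
Qed.

Lemma index_enum_rank x : index x (enum T) = enum_rank x.
Proof.
by rewrite -{1}(nth_enum_rank x x) index_uniq ?enum_uniq // -cardE ltn_ord.
Qed.

End Rank.

Arguments perm_pos_inj {T} p.
Arguments lex_pos_inj {T} key.

Section BackDegree.
Variables (T : finType) (e : rel T) (k : T -> nat).
Implicit Types (pos : T -> nat).

Definition nbhd u := [set v | e u v].

Definition back_deg pos u := #|[set v in nbhd u | pos v < pos u]|.

Lemma back_deg_le pos u : back_deg pos u <= deg e u.
Proof. by apply: subset_leq_card; apply/subsetP => v; rewrite inE => /andP[]. Qed.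

Lemma eq_back_deg pos pos' : (forall x y, (pos x < pos y) = (pos' x < pos' y)) ->
  back_deg pos =1 back_deg pos'.
Proof. by move=> eq_lt u; apply: eq_card => v; rewrite !inE eq_lt. Qed.

Lemma back_deg_rank_in pos u : back_deg pos u = rank_in pos (u |: nbhd u) u.
Proof.
apply: eq_card => v; rewrite !inE.
by case: (v =P u) => [->|]; rewrite ?ltnn ?andbF.
Qed.

Lemma admissible_back_deg (p : {perm T}) :
  admissible e (fun u => Posz (k u)) (fun u => back_deg (perm_pos p) u - k u).
Proof.
exists [seq p^-1%g x | x <- enum T]; split.
- by rewrite map_inj_uniq ?enum_uniq //; apply: perm_inj.
- by move=> x; rewrite inE -{1}(permK p x) mem_map ?mem_enum //; apply: perm_inj.
have index_pos v : index v [seq p^-1%g x | x <- enum T] = perm_pos p v.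
  by rewrite -{1}(permK p v) index_map ?index_enum_rank //; apply: perm_inj.
move=> s1 s2 u def_s.
have s_uniq : uniq (s1 ++ u :: s2).
  by rewrite -def_s map_inj_uniq ?enum_uniq //; apply: perm_inj.
have -> : [set v in s1 | e u v] = [set v in nbhd u | perm_pos p v < perm_pos p u].
  by apply/setP => v; rewrite !inE -(index_ltn_prefix v s_uniq) -def_s !index_pos andbC.
by rewrite -PoszD lez_nat -leq_subLR.
Qed.

Lemma admissible_back_deg_le iota : admissible e (fun u => Posz (k u)) iota ->
  exists2 pos, injective pos & forall u, back_deg pos u - k u <= iota u.
Proof.
case=> s [s_uniq mem_s s_deg].
have in_s x : x \in s by rewrite mem_s inE.
exists (index^~ s) => [x y|u]; first by apply: index_inj; rewrite ?in_s.
case/splitPr: (in_s u) s_uniq s_deg => s1 s2 s_uniq /(_ s1 s2 u erefl).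
have -> : [set v in s1 | e u v] =
          [set v in nbhd u | index v (s1 ++ u :: s2) < index u (s1 ++ u :: s2)].
  by apply/setP => v; rewrite !inE (index_ltn_prefix v s_uniq) andbC.
by rewrite -PoszD lez_nat leq_subLR.
Qed.

Hypotheses (sym_e : symmetric e) (irr_e : irreflexive e).

Lemma card_closed_nbhd u : #|u |: nbhd u| = (deg e u).+1.
Proof. by rewrite cardsU1 inE irr_e. Qed.

Lemma handshake pos : injective pos -> 2 * \sum_u back_deg pos u = \sum_u deg e u.
Proof.
move=> pos_inj.
have back_deg_sum u : back_deg pos u = \sum_v (e u v && (pos v < pos u)).
  by rewrite /back_deg -sum1_card big_mkcond; apply: eq_bigr => v _; rewrite !inE.
have deg_split u : deg e u = back_deg pos u + \sum_v (e v u && (pos u < pos v)).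
  rewrite back_deg_sum /deg -sum1_card big_mkcond -big_split /=.
  apply: eq_bigr => v _; rewrite inE (sym_e v u); case: (boolP (e u v)) => //= euv.
  have: pos u != pos v by apply: contraTneq euv => /pos_inj ->; rewrite irr_e.
  by case: ltngtP.
rewrite (eq_bigr _ (fun u _ => deg_split u)) big_split /= [X in _ + X]exchange_big /=.
by rewrite mul2n -addnn (eq_bigr _ (fun u _ => back_deg_sum u)).
Qed.

Lemma back_deg_complete pos u : (forall x y, x != y -> e x y) ->
  back_deg pos u = rank_in pos [set: T] u.
Proof.
move=> complete; apply: eq_card => v; rewrite !inE.
case: (v =P u) => [->|/eqP neq_vu]; first by rewrite irr_e ltnn.
by rewrite complete // eq_sym.
Qed.

End BackDegree.

Lemma double_sum_subn m n : 2 * \sum_(j < m.+1) (j - n) = (m - n) * (m - n).+1.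
Proof.
elim: m => [|m IH]; first by rewrite big_ord_recr big_ord0.
rewrite big_ord_recr /= mulnDr IH; case: (leqP n m) => [le_nm | lt_mn].
  by rewrite (subSn le_nm); set d := m - n; ring.
by have [-> ->] : m - n = 0 /\ m.+1 - n = 0 by lia.
Qed.

Lemma subSn_leq m n : n.+1 - m = n - m + (m <= n).
Proof. by case: (leqP m n) => [/subSn -> | lt_nm]; lia. Qed.

Section OrderCost.
Variables (R : realFieldType) (T : finType) (e : rel T) (c : T -> R) (k : T -> nat).
Hypotheses (irr_e : irreflexive e) (c_gt0 : forall u, (0 < c u)%R).
Implicit Types (pos : T -> nat).
Local Open Scope ring_scope.

Definition order_cost pos : R := \sum_u c u * (back_deg e pos u - k u)%:R.

Definition avg_cost : R :=
  \sum_u c u * (((deg e u - k u) * (deg e u - k u).+1)%:R / (2 * (deg e u).+1%:R)).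

Definition order_cost_invariant : Prop :=
  forall pos pos', injective pos -> injective pos' -> order_cost pos = order_cost pos'.

Lemma order_cost_perm pos : injective pos ->
  exists p : {perm T}, order_cost pos = order_cost (perm_pos p).
Proof.
move=> /perm_pos_of_inj[p lt_p]; exists p.
by apply: eq_bigr => u _; rewrite (eq_back_deg _ lt_p).
Qed.

Lemma sum_order_cost :
  \sum_(p : {perm T}) order_cost (perm_pos p) = #|{perm T}|%:R * avg_cost.
Proof.
rewrite exchange_big mulr_sumr; apply: eq_bigr => u _.
rewrite -mulr_sumr -natr_sum mulrCA; congr (c u * _).
have := sum_perm_rank_in (fun j => (j - k u)%N) (setU11 u (nbhd e u)).
rewrite card_closed_nbhd // => eq_sum.
have {}eq_sum : (deg e u).+1%:R * (\sum_(p : {perm T}) (back_deg e (perm_pos p) u - k u))%:R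
                = #|{perm T}|%:R * (\sum_(j < (deg e u).+1) (j - k u))%:R :> R.
  by rewrite -!natrM -eq_sum; under eq_bigr do rewrite back_deg_rank_in.
have D_neq0 : (deg e u).+1%:R != 0 :> R by rewrite pnatr_eq0.
rewrite -double_sum_subn -[LHS](mulKf D_neq0) eq_sum natrM; field.
by rewrite nat1r.
Qed.

Lemma is_beta_avg_costP :
  is_beta e c (fun u => Posz (k u)) avg_cost <-> order_cost_invariant.
Proof.
have perms_gt0 : 0 < #|{perm T}|%:R :> R by rewrite ltr0n; apply/card_gt0P; exists 1%g.
split=> [[_ beta_le] | inv].
  have cost_avg p : order_cost (perm_pos p) = avg_cost.
    have avg_le q : avg_cost <= order_cost (perm_pos q).
      exact: beta_le (admissible_back_deg e k q).
    have sum0 : \sum_q (order_cost (perm_pos q) - avg_cost) = 0.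
      by rewrite sumrB sum_order_cost sumr_const mulr_natl subrr.
    apply/eqP; rewrite -subr_eq0; apply/eqP.
    by apply: (psumr_eq0P _ sum0) => // q _; rewrite subr_ge0.
  by move=> pos pos' /order_cost_perm[p ->] /order_cost_perm[p' ->]; rewrite !cost_avg.
have cost_avg p : order_cost (perm_pos p) = avg_cost.
  rewrite (inv _ _ (perm_pos_inj p) (perm_pos_inj 1)).
  apply: (mulfI (lt0r_neq0 perms_gt0)); rewrite -sum_order_cost.
  under eq_bigr do rewrite (inv _ _ (perm_pos_inj _) (perm_pos_inj 1)).
  by rewrite sumr_const mulr_natl.
split.
  exists (fun u => back_deg e (perm_pos 1) u - k u)%N.
  by split; [apply: admissible_back_deg | apply: cost_avg].
move=> iota /admissible_back_deg_le[pos pos_inj le_iota].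
rewrite -(cost_avg 1%g) -(inv _ _ pos_inj (perm_pos_inj 1)).
by apply: ler_sum => u _; rewrite ler_wpM2l ?ler_nat ?le_iota // ltW.
Qed.

Lemma order_cost_invariant_deg :
  (forall u, k u = deg e u) -> order_cost_invariant.
Proof.
move=> k_deg pos pos' _ _.
suff cost0 q : order_cost q = 0 by rewrite !cost0.
apply: big1 => u _; rewrite k_deg.
have /eqP -> : (back_deg e q u - deg e u == 0)%N by rewrite subn_eq0 back_deg_le.
by rewrite mulr0.
Qed.

Lemma order_cost_invariant_k0 : symmetric e ->
  (forall u v, c u = c v) -> (forall u, k u = 0%N) -> order_cost_invariant.
Proof.
move=> sym_e c_const k0 pos pos' pos_inj pos'_inj.
have [x _ | T0] := pickP (fun _ : T => true); last by rewrite /order_cost !big_pred0.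
have cost_E q : order_cost q = c x * (\sum_u back_deg e q u)%:R.
  by rewrite natr_sum mulr_sumr; apply: eq_bigr => u _; rewrite k0 subn0 (c_const u x).
rewrite !cost_E; congr (_ * _%:R); apply/eqP.
by rewrite -(eqn_pmul2l (isT : 0 < 2)%N) !handshake.
Qed.

Lemma order_cost_invariant_complete : (forall x y, x != y -> e x y) ->
  (forall u v, c u = c v) -> (forall u v, k u = k v) -> order_cost_invariant.
Proof.
move=> complete c_const k_const pos pos' pos_inj pos'_inj.
have [x _ | T0] := pickP (fun _ : T => true); last by rewrite /order_cost !big_pred0.
have cost_E q : injective q ->
    order_cost q = c x * \sum_(j < #|[set: T]|) (j - k x)%:R.
  move=> q_inj; rewrite -(sum_rank_in [set: T] (fun j => (j - k x)%:R) q_inj) mulr_sumr.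
  apply: eq_big => [u | u _]; first by rewrite inE.
  by rewrite (c_const u x) (k_const u x) back_deg_complete.
by rewrite !cost_E.
Qed.

End OrderCost.

Section SwapKey.
Variables (T : finType) (S : {set T}).

Definition swap_key u v x : nat :=
  if x \in S then 0 else if x == u then 1 else if x == v then 2 else 3.

Lemma swap_key_ltn_first u v y : u \notin S ->
  (lex_pos (swap_key u v) y < lex_pos (swap_key u v) u) = (y \in S).
Proof.
move=> uS; have key_u : swap_key u v u = 1 by rewrite /swap_key (negbTE uS) eqxx.
rewrite lex_pos_ltn key_u /swap_key.
by case: (y \in S) => //; case: (y =P u) => [->|]; rewrite ?ltnn //; case: (y == v).
Qed.

Lemma swap_key_ltn_second u v y : u != v -> v \notin S ->
  (lex_pos (swap_key u v) y < lex_pos (swap_key u v) v) = (y \in u |: S).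
Proof.
move=> neq_uv vS.
have key_v : swap_key u v v = 2 by rewrite /swap_key (negbTE vS) eq_sym (negbTE neq_uv) eqxx.
rewrite lex_pos_ltn key_v /swap_key !inE.
case: (y \in S); rewrite ?orbT //.
by case: (y =P u) => //= _; case: (y =P v) => [->|]; rewrite ?ltnn.
Qed.

Lemma swap_key_ltn_other u v x y : x != u -> x != v ->
  (lex_pos (swap_key u v) y < lex_pos (swap_key u v) x) =
  (lex_pos (swap_key v u) y < lex_pos (swap_key v u) x).
Proof.
move=> xu xv; rewrite !lex_pos_ltn /swap_key (negbTE xu) (negbTE xv).
by case: (x \in S); case: (y \in S); case: (y == u); case: (y == v).
Qed.

End SwapKey.

(* What invariance of the order cost forces when the adjacent vertices u and v,
   placed right after S, trade places. *)
Definition swap_rule (C : Type) (T : finType) (e : rel T) (c : T -> C) (k : T -> nat) :=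
  forall (S : {set T}) u v, e u v -> u \notin S -> v \notin S ->
    (k u <= #|nbhd e u :&: S|) = (k v <= #|nbhd e v :&: S|) /\
    (k u <= #|nbhd e u :&: S| -> c u = c v).

Section ThresholdSwap.
Variables (R : realFieldType) (T : finType) (e : rel T) (c : T -> R) (k : T -> nat).
Hypotheses (sym_e : symmetric e) (irr_e : irreflexive e) (c_gt0 : forall u, (0 < c u)%R).
Hypothesis cost_inv : order_cost_invariant e c k.

Lemma back_deg_swap_key_first (S : {set T}) u v : u \notin S ->
  back_deg e (lex_pos (swap_key S u v)) u = #|nbhd e u :&: S|.
Proof. by move=> uS; apply: eq_card => y; rewrite !inE swap_key_ltn_first. Qed.

Lemma back_deg_swap_key_second (S : {set T}) u v : e u v -> u \notin S -> v \notin S ->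
  back_deg e (lex_pos (swap_key S u v)) v = #|nbhd e v :&: S|.+1.
Proof.
move=> euv uS vS; have neq_uv : u != v by apply: contraTneq euv => ->; rewrite irr_e.
rewrite /back_deg.
have -> : [set y in nbhd e v | lex_pos (swap_key S u v) y < lex_pos (swap_key S u v) v] =
          u |: (nbhd e v :&: S).
  apply/setP => y; rewrite !inE swap_key_ltn_second // !inE.
  by case: (y =P u) => [->|_] //=; rewrite andbT sym_e.
by rewrite cardsU1 !inE (negbTE uS) andbF.
Qed.

Lemma back_deg_swap_key_other (S : {set T}) u v x : x != u -> x != v ->
  back_deg e (lex_pos (swap_key S u v)) x = back_deg e (lex_pos (swap_key S v u)) x.
Proof. by move=> xu xv; apply: eq_card => y; rewrite !inE swap_key_ltn_other. Qed.

Lemma threshold_swap (S : {set T}) u v : e u v -> u \notin S -> v \notin S ->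
  (c u *+ (k u <= #|nbhd e u :&: S|) = c v *+ (k v <= #|nbhd e v :&: S|))%R.
Proof.
move=> euv uS vS; have neq_uv : u != v by apply: contraTneq euv => ->; rewrite irr_e.
have vu_e : e v u by rewrite sym_e.
have split_uv (F : T -> R) :
    (\sum_x F x = F u + (F v + \sum_(x | (x != u) && (x != v)) F x))%R.
  by rewrite (bigD1 u) // (bigD1 v) 1?eq_sym.
have := cost_inv (lex_pos_inj (swap_key S u v)) (lex_pos_inj (swap_key S v u)).
rewrite /order_cost split_uv [in RHS]split_uv.
under eq_bigr => x /andP[xu xv] do rewrite back_deg_swap_key_other //.
rewrite !back_deg_swap_key_first // !back_deg_swap_key_second //.
move: #|nbhd e u :&: S| #|nbhd e v :&: S| => a b.
rewrite (subSn_leq (k u) a) (subSn_leq (k v) b) !natrD !mulrDr !mulr_natr; lra.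
Qed.

Lemma order_cost_invariant_swap_rule : swap_rule e c k.
Proof.
move=> S u v euv uS vS; have := threshold_swap euv uS vS.
case: (k u <= _); case: (k v <= _); rewrite ?mulr1n ?mulr0n => eq_c //.
- by have := c_gt0 u; rewrite eq_c ltxx.
- by have := c_gt0 v; rewrite -eq_c ltxx.
Qed.

End ThresholdSwap.

Section ThresholdCases.
Variables (C : Type) (T : finType) (e : rel T) (c : T -> C) (k : T -> nat).
Hypotheses (sym_e : symmetric e) (irr_e : irreflexive e) (conn : connected_graph e).
Hypothesis threshold : swap_rule e c k.

Lemma threshold_k0 u v : e u v -> k u = 0 -> k v = 0 /\ c u = c v.
Proof.
move=> euv ku0; have [] := @threshold set0 u v euv; rewrite ?inE //.
by rewrite !setI0 !cards0 ku0 => /esym; rewrite leqn0 => /eqP kv0 /(_ isT).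
Qed.

Lemma deg_nbhd_out u v : e u v -> deg e u = #|nbhd e u :&: ~: [set u; v]|.+1.
Proof.
move=> euv; have := cardsU1 v (nbhd e u :&: ~: [set u; v]).
rewrite !inE eqxx orbT andbF add1n => <-; apply: eq_card => y; rewrite !inE.
case: (y =P v) => [->|_]; first by rewrite euv.
by case: (y =P u) => [->|_]; rewrite ?irr_e ?andbF ?andbT.
Qed.

Lemma threshold_lt_deg u v : e u v -> k u < deg e u -> k v < deg e v /\ c u = c v.
Proof.
move=> euv ku_lt; have uS : u \notin ~: [set u; v] by rewrite !inE eqxx.
have vS : v \notin ~: [set u; v] by rewrite !inE eqxx orbT.
have [eq_thr c_eq] := threshold euv uS vS.
rewrite (deg_nbhd_out euv) ltnS in ku_lt.
rewrite (deg_nbhd_out (_ : e v u)) 1?sym_e // setUC ltnS -eq_thr.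
by split=> //; apply: c_eq.
Qed.

Lemma threshold_interior u v : e u v -> 0 < k u < deg e u ->
  k v <= k u /\ (k u <= k v -> u |: nbhd e u \subset v |: nbhd e v).
Proof.
move=> euv /andP[ku_gt0 ku_lt].
set S0 := nbhd e u :&: ~: [set u; v].
have le_kS0 : k u <= #|S0| by rewrite -ltnS -(deg_nbhd_out euv).
have outside (S : {set T}) : S \subset S0 -> u \notin S /\ v \notin S.
  by move=> /subsetP sS; split; apply/negP => /sS; rewrite !inE eqxx ?orbT andbF.
have nbhd_S (S : {set T}) : S \subset S0 -> nbhd e u :&: S = S.
  by move=> sS; apply/setIidPr; apply: subset_trans sS (subsetIl _ _).
have [S sS cardS] := exists_subset_card le_kS0; have [uS vS] := outside S sS.
have [eq_thr _] := threshold euv uS vS.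
have kv_le : k v <= k u.
  rewrite -cardS (leq_trans _ (subset_leq_card (subsetIr (nbhd e v) S))) //.
  by rewrite -eq_thr nbhd_S // cardS.
split=> // ku_le; apply/subsetP => w; rewrite !inE.
case/orP=> [/eqP-> | euw]; first by rewrite sym_e euv orbT.
case: (w =P v) => //= /eqP wv; apply/contraT => not_evw.
have wS0 : w \in S0.
  by rewrite !inE euw (negbTE wv) orbF; apply: contraTneq euw => ->; rewrite irr_e.
have [S' [sS' wS' cardS']] := exists_subset_card_mem wS0 (introT andP (conj ku_gt0 le_kS0)).
have [uS' vS'] := outside S' sS'; have [eq_thr' _] := threshold euv uS' vS'.
have : k v <= #|nbhd e v :&: S'| by rewrite -eq_thr' nbhd_S // cardS'.
have : #|nbhd e v :&: S'| <= #|S' :\ w|.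
  apply: subset_leq_card; apply/subsetP => y; rewrite !inE => /andP[evy ->].
  by rewrite andbT; apply: contraNneq not_evw => <-.
have := cardsD1 w S'; rewrite wS' cardS'; lia.
Qed.

Lemma threshold_k0_everywhere u : k u = 0 -> (forall x y, c x = c y) /\ (forall x, k x = 0).
Proof.
move=> ku0; have in_class x : k x = 0 /\ c x = c u.
  apply: (connected_invariant (P := fun x => k x = 0 /\ c x = c u)
            conn _ (conj ku0 erefl)).
  by move=> y z eyz [ky0 <-]; have [-> ->] := threshold_k0 eyz ky0.
by split=> [x y | x]; [rewrite (in_class x).2 (in_class y).2 | apply: (in_class x).1].
Qed.

Lemma threshold_lt_deg_everywhere u : k u < deg e u ->
  (forall x y, c x = c y) /\ (forall x, k x < deg e x).
Proof.
move=> ku_lt; have in_class x : k x < deg e x /\ c x = c u.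
  apply: (connected_invariant (P := fun x => k x < deg e x /\ c x = c u)
            conn _ (conj ku_lt erefl)).
  by move=> y z eyz [ky_lt <-]; have [-> ->] := threshold_lt_deg eyz ky_lt.
by split=> [x y | x]; [rewrite (in_class x).2 (in_class y).2 | apply: (in_class x).1].
Qed.

Lemma threshold_complete : (forall x, 0 < k x < deg e x) ->
  (forall x y, x != y -> e x y) /\ (forall x y, k x = k y).
Proof.
move=> k_interior.
have edge_eq x y : e x y -> k x = k y /\ x |: nbhd e x = y |: nbhd e y.
  move=> exy; have eyx : e y x by rewrite sym_e.
  have [le_kyx sub_xy] := threshold_interior exy (k_interior x).
  have [le_kxy sub_yx] := threshold_interior eyx (k_interior y).
  by split; [apply/eqP; rewrite eqn_leq le_kxy | apply/eqP; rewrite eqEsubset sub_xy ?sub_yx].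
split=> x y; last first.
  apply: (connected_invariant (P := fun z => k x = k z) conn _ erefl).
  by move=> z1 z2 ez12 ->; apply: (edge_eq _ _ ez12).1.
move=> neq_xy; have closed_nbhd_eq z : x |: nbhd e x = z |: nbhd e z.
  apply: (connected_invariant (P := fun z => x |: nbhd e x = z |: nbhd e z) conn _ erefl).
  by move=> z1 z2 ez12 ->; apply: (edge_eq _ _ ez12).2.
have := setU11 y (nbhd e y); rewrite -closed_nbhd_eq !inE.
by rewrite eq_sym (negbTE neq_xy).
Qed.

Lemma threshold_cases : (forall u, k u <= deg e u) ->
  [\/ (forall u, k u = deg e u), (forall u v, c u = c v) /\ (forall u, k u = 0)
     | [/\ (forall u v, u != v -> e u v), (forall u v, c u = c v),
            (forall u v, k u = k v) & (forall u, 0 < k u < deg e u)]].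
Proof.
move=> k_le.
have [/forallP k_deg | /forallPn[u0 ku0]] := boolP [forall u, k u == deg e u].
  by constructor 1 => u; apply/eqP.
have ku0_lt : k u0 < deg e u0 by rewrite ltn_neqAle ku0 k_le.
have [/existsP[u1 /eqP ku1] | /existsPn k_gt0] := boolP [exists u, k u == 0].
  by constructor 2; apply: threshold_k0_everywhere ku1.
have [c_const k_lt] := threshold_lt_deg_everywhere ku0_lt.
have k_interior x : 0 < k x < deg e x by rewrite lt0n k_gt0 k_lt.
by have [complete k_const] := threshold_complete k_interior; constructor 3.
Qed.

End ThresholdCases.

Unset Implicit Arguments.
Local Open Scope ring_scope.

Theorem theorem3 (R : realFieldType) (T : finType) (e : rel T)
  (c : T -> R) (kappa : T -> int) :
  simple_graph e -> connected_graph e ->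
  (forall u, 0 < c u) ->
  (forall u, 0 <= kappa u <= (deg e u)%:Z) ->
  is_beta e c kappa
    (\sum_(u : T) c u * ((((deg e u)%:Z - kappa u) * ((deg e u)%:Z - kappa u + 1))%:~R
                          / (2 * ((deg e u).+1)%:R)))
  <->
  [\/ (forall u, kappa u = (deg e u)%:Z),
      (forall u v, c u = c v) /\ (forall u, kappa u = 0)
    | [/\ (forall u v, u != v -> e u v),
          (forall u v, c u = c v), (forall u v, kappa u = kappa v) &
          (forall u, 0 < kappa u < (deg e u)%:Z)]].
Proof.
move=> [sym_e irr_e] conn c_gt0 kappa_bounds.
pose k u := `|kappa u|%N.
have kappaE : kappa = fun u => Posz (k u).
  by apply: functional_extensionality => u; rewrite /k gez0_abs //; case/andP: (kappa_bounds u).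
have k_le u : (k u <= deg e u)%N by have := kappa_bounds u; rewrite kappaE lez_nat => /andP[].
have -> : \sum_u c u * ((((deg e u)%:Z - kappa u) * ((deg e u)%:Z - kappa u + 1))%:~R
                          / (2 * ((deg e u).+1)%:R)) = avg_cost e c k.
  by apply: eq_bigr => u _; rewrite kappaE subzn ?k_le // -PoszD addn1 -PoszM.
rewrite kappaE is_beta_avg_costP //; split=> [cost_inv | ].
  have := order_cost_invariant_swap_rule sym_e irr_e c_gt0 cost_inv.
  move/(threshold_cases sym_e irr_e conn)/(_ k_le).
  case=> [k_deg | [c_const k0] | [complete c_const k_const k_int]].
  - by constructor 1 => u; rewrite k_deg.
  - by constructor 2; split=> // u; rewrite k0.
  - by constructor 3; split=> // u v; rewrite (k_const u v).
case=> [k_deg | [c_const k0] | [complete c_const k_const _]].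
- by apply: order_cost_invariant_deg => u; case: (k_deg u).
- by apply: order_cost_invariant_k0 => // u; case: (k0 u).
- by apply: order_cost_invariant_complete => // u v; case: (k_const u v).
Qed.
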